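(* Let $\lambda,\mu,\theta>0$, $\alpha\in\mathbb{R}$ and $\hat\lambda,\hat\mu,\hat\theta,\hat\alpha\in\mathbb{R}$, and let $\epsilon$ be a small parameter. Consider the delay differential system, with delay $\Delta>0$, $$\dot q_1(t) = (\lambda+\epsilon\hat\lambda)\,\frac{\exp\big(-(\theta+\epsilon\hat\theta)q_1(t-\Delta)+(\alpha+\epsilon\hat\alpha)\big)}{\exp\big(-(\theta+\epsilon\hat\theta)q_1(t-\Delta)+(\alpha+\epsilon\hat\alpha)\big)+\exp\big(-\theta q_2(t-\Delta)+\alpha\big)} - (\mu+\epsilon\hat\mu)\,q_1(t),$$ $$\dot q_2(t) = \lambda\,\frac{\exp\big(-\theta q_2(t-\Delta)+\alpha\big)}{\exp\big(-(\theta+\epsilon\hat\theta)q_1(t-\Delta)+(\alpha+\epsilon\hat\alpha)\big)+\exp\big(-\theta q_2(t-\Delta)+\alpha\big)} - \mu\,q_2(t).$$ Then this system has an approximate (up to order $\epsilon^2$) equilibrium point (constant solution) $$(q_1^*,q_2^* )=\Big(\frac{\lambda}{2\mu}+a\epsilon+O(\epsilon^2),\ \frac{\lambda}{2\mu}+b\epsilon+O(\epsilon^2)\Big),$$ where $$a=\frac{\lambda\theta+4\mu}{4\mu(\lambda\theta+2\mu)}\hat\lambda-\frac{\lambda(\lambda\theta+4\mu)}{4\mu^2(\lambda\theta+2\mu)}\hat\mu-\frac{\lambda^2}{4\mu(\lambda\theta+2\mu)}\hat\theta+\frac{\lambda}{2(\lambda\theta+2\mu)}\hat\alpha,$$ $$b=\frac{\lambda\theta}{4\mu(\lambda\theta+2\mu)}\hat\lambda-\frac{\lambda^2\theta}{4\mu^2(\lambda\theta+2\mu)}\hat\mu+\frac{\lambda^2}{4\mu(\lambda\theta+2\mu)}\hat\theta-\frac{\lambda}{2(\lambda\theta+2\mu)}\hat\alpha;$$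 that is, substituting these constants into the right-hand sides makes them vanish up to $O(\epsilon^2)$.
   Context: $q_1(t),q_2(t)$ are fluid queue lengths of two infinite-server queues; $\lambda$ is the arrival rate, $\mu$ the service rate, $\theta$ the customer sensitivity to queue length, $\alpha$ the preference parameter; the hatted quantities are perturbations applied (scaled by $\epsilon$) to the parameters of the first queue. Initial data are continuous functions on $[-\Delta,0]$. *)

From Stdlib Require Import Reals Lra.
Open Scope R_scope.

(* Right-hand side of the q1 equation, as a function of the delayed values
   q1d = q1(t-Delta), q2d = q2(t-Delta) and the current value q1t = q1(t). *)
Definition rhs1 (lam mu th al lh mh thh alh eps : R) (q1d q2d q1t : R) : R :=
  let e1 := exp (- (th + eps * thh) * q1d + (al + eps * alh)) in
  let e2 := exp (- th * q2d + al) in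
  (lam + eps * lh) * (e1 / (e1 + e2)) - (mu + eps * mh) * q1t.

Definition rhs2 (lam mu th al lh mh thh alh eps : R) (q1d q2d q2t : R) : R :=
  let e1 := exp (- (th + eps * thh) * q1d + (al + eps * alh)) in
  let e2 := exp (- th * q2d + al) in
  lam * (e2 / (e1 + e2)) - mu * q2t.

Definition coef_a (lam mu th lh mh thh alh : R) : R :=
  (lam * th + 4 * mu) / (4 * mu * (lam * th + 2 * mu)) * lh
  - lam * (lam * th + 4 * mu) / (4 * mu ^ 2 * (lam * th + 2 * mu)) * mh
  - lam ^ 2 / (4 * mu * (lam * th + 2 * mu)) * thh
  + lam / (2 * (lam * th + 2 * mu)) * alh.

Definition coef_b (lam mu th lh mh thh alh : R) : R :=
  lam * th / (4 * mu * (lam * th + 2 * mu)) * lh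
  - lam ^ 2 * th / (4 * mu ^ 2 * (lam * th + 2 * mu)) * mh
  + lam ^ 2 / (4 * mu * (lam * th + 2 * mu)) * thh
  - lam / (2 * (lam * th + 2 * mu)) * alh.

Definition bigO_eps2 (f : R -> R) : Prop :=
  exists C delta, 0 < delta /\
    forall eps, Rabs eps < delta -> Rabs (f eps) <= C * eps ^ 2.

(* Writing the logistic share as [exp u / (exp u + exp v) = 1/2 - (v - u)/4 + r (v - u)]
   with a remainder [r x = O(x^2)] (the logistic function has no quadratic Taylor
   term at 0), each right-hand side becomes an explicit polynomial in [eps] plus
   a bounded multiple of [r (eps d1 + eps^2 d2)].  The coefficients [coef_a] and
   [coef_b] are exactly those for which the constant and linear terms of that
   polynomial cancel, so what is left is [O(eps^2)]. *)
From Stdlib Require Import Reals Lra Psatz.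
Open Scope R_scope.

Definition bigO_eps1 (h : R -> R) : Prop :=
  exists L delta, 0 < delta /\
    forall eps, Rabs eps < delta -> Rabs (h eps) <= L * Rabs eps.

Lemma bigO_eps2_ext (f g : R -> R) :
  (forall eps, f eps = g eps) -> bigO_eps2 g -> bigO_eps2 f.
Proof.
  intros Hfg [C [delta [Hd Hg]]].
  exists C, delta; split; [exact Hd |].
  intros eps He; rewrite Hfg; exact (Hg eps He).
Qed.

Lemma bigO_eps2_nonneg (f : R -> R) :
  bigO_eps2 f -> exists C delta, 0 <= C /\ 0 < delta /\
    forall eps, Rabs eps < delta -> Rabs (f eps) <= C * eps ^ 2.
Proof.
  intros [C [delta [Hd Hf]]].
  exists (Rmax C 0), delta; split; [apply Rmax_r | split; [exact Hd |]].
  intros eps He.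
  pose proof (Rmax_l C 0); pose proof (pow2_ge_0 eps); specialize (Hf eps He).
  nra.
Qed.

Lemma bigO_eps2_sq : bigO_eps2 (fun eps => eps ^ 2).
Proof.
  exists 1, 1; split; [lra |].
  intros eps _; rewrite Rabs_pos_eq by apply pow2_ge_0; lra.
Qed.

Lemma bigO_eps2_add (f g : R -> R) :
  bigO_eps2 f -> bigO_eps2 g -> bigO_eps2 (fun eps => f eps + g eps).
Proof.
  intros [C [delta [Hd Hf]]] [C' [delta' [Hd' Hg]]].
  exists (C + C'), (Rmin delta delta'); split; [now apply Rmin_pos |].
  intros eps He.
  specialize (Hf eps (Rlt_le_trans _ _ _ He (Rmin_l _ _))).
  specialize (Hg eps (Rlt_le_trans _ _ _ He (Rmin_r _ _))).
  eapply Rle_trans; [apply Rabs_triang | lra].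
Qed.

Lemma bigO_eps2_mul_affine (a b : R) (f : R -> R) :
  bigO_eps2 f -> bigO_eps2 (fun eps => (a + b * eps) * f eps).
Proof.
  intros Hf; destruct (bigO_eps2_nonneg f Hf) as [C [delta [HC [Hd Hfb]]]].
  exists ((Rabs a + Rabs b) * C), (Rmin delta 1); split; [apply Rmin_pos; lra |].
  intros eps He.
  specialize (Hfb eps (Rlt_le_trans _ _ _ He (Rmin_l _ _))).
  assert (He1 : Rabs eps < 1) by exact (Rlt_le_trans _ _ _ He (Rmin_r _ _)).
  assert (Hab : Rabs (a + b * eps) <= Rabs a + Rabs b).
  { eapply Rle_trans; [apply Rabs_triang |]; rewrite Rabs_mult.
    pose proof (Rabs_pos b); pose proof (Rabs_pos eps); nra. }
  rewrite Rabs_mult.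
  pose proof (Rabs_pos (a + b * eps)); pose proof (Rabs_pos (f eps)).
  pose proof (pow2_ge_0 eps); nra.
Qed.

Lemma bigO_eps1_poly (d1 d2 : R) : bigO_eps1 (fun eps => eps * d1 + eps ^ 2 * d2).
Proof.
  exists (Rabs d1 + Rabs d2), 1; split; [lra |].
  intros eps He.
  eapply Rle_trans; [apply Rabs_triang |].
  rewrite !Rabs_mult, <- RPow_abs.
  pose proof (Rabs_pos eps); pose proof (Rabs_pos d1); pose proof (Rabs_pos d2).
  assert (Rabs eps ^ 2 <= Rabs eps) by (simpl; nra).
  nra.
Qed.

Lemma bigO_eps2_comp (g h : R -> R) :
  bigO_eps2 g -> bigO_eps1 h -> bigO_eps2 (fun eps => g (h eps)).
Proof.
  intros Hg [L [delta [Hd Hh]]].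
  destruct (bigO_eps2_nonneg g Hg) as [C [r [HC [Hr Hgb]]]].
  set (L' := Rabs L).
  assert (HL' : 0 <= L') by apply Rabs_pos.
  assert (HLL' : L <= L') by apply Rle_abs.
  clearbody L'.
  exists (C * L' ^ 2), (Rmin delta (r / (L' + 1))); split.
  { apply Rmin_pos; [exact Hd | apply Rdiv_lt_0_compat; lra]. }
  intros eps He.
  assert (Hsmall : Rabs eps * (L' + 1) < r).
  { pose proof (Rlt_le_trans _ _ _ He (Rmin_r _ _)) as He'.
    apply (Rmult_lt_compat_r (L' + 1)) in He'; [| lra].
    now replace (r / (L' + 1) * (L' + 1)) with r in He' by (field; lra). }
  assert (HhL : Rabs (h eps) <= L' * Rabs eps).
  { pose proof (Hh eps (Rlt_le_trans _ _ _ He (Rmin_l _ _))).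
    pose proof (Rabs_pos eps); nra. }
  pose proof (Rabs_pos eps); pose proof (Rabs_pos (h eps)).
  assert (Hhsq : h eps ^ 2 <= L' ^ 2 * eps ^ 2).
  { rewrite <- (pow2_abs (h eps)), <- (pow2_abs eps); nra. }
  assert (Hhr : Rabs (h eps) < r) by nra.
  specialize (Hgb (h eps) Hhr).
  nra.
Qed.

Definition logistic_rem (x : R) : R := 1 / (1 + exp x) - (1 / 2 - x / 4).

Lemma logistic_rem_bound (x : R) : Rabs x <= 1 / 2 -> Rabs (logistic_rem x) <= 2 * x ^ 2.
Proof.
  intros Hx.
  pose proof (Rle_abs x); pose proof (Rle_abs (- x)); rewrite Rabs_Ropp in *.
  assert (Hinv : exp x * exp (- x) = 1) by (rewrite <- exp_plus, Rplus_opp_r; apply exp_0).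
  pose proof (exp_ineq1_le x); pose proof (exp_ineq1_le (- x)); pose proof (exp_pos x).
  unfold logistic_rem; set (e := exp x) in *; set (e' := exp (- x)) in *.
  (* [0 <= e - 1 - x <= x^2 / (1 - x) <= 2 x^2], using [e' = 1 / e >= 1 - x]. *)
  assert (Hexp2 : e - 1 - x <= 2 * x ^ 2) by nra.
  replace (1 / (1 + e) - (1 / 2 - x / 4))
    with ((- 2 * (e - 1 - x) + x * (e - 1 - x) + x ^ 2) / (4 * (1 + e))) by (field; lra).
  unfold Rdiv; rewrite Rabs_mult, (Rabs_pos_eq (/ _)) by (apply Rlt_le, Rinv_0_lt_compat; lra).
  assert (Hnum : Rabs (- 2 * (e - 1 - x) + x * (e - 1 - x) + x ^ 2) <= 8 * x ^ 2 * (1 + e)).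
  { apply Rabs_le; split; nra. }
  apply (Rmult_le_reg_r (4 * (1 + e))); [lra |].
  rewrite Rmult_assoc, Rinv_l by lra; nra.
Qed.

Lemma bigO_eps2_logistic_rem : bigO_eps2 logistic_rem.
Proof.
  exists 2, (1 / 2); split; [lra |].
  intros x Hx; apply logistic_rem_bound; lra.
Qed.

Lemma logistic_share (u v : R) :
  exp u / (exp u + exp v) = 1 / 2 - (v - u) / 4 + logistic_rem (v - u).
Proof.
  unfold logistic_rem.
  replace (exp v) with (exp u * exp (v - u)) by (rewrite <- exp_plus; f_equal; ring).
  pose proof (exp_pos u); pose proof (exp_pos (v - u)); field; nra.
Qed.

Lemma logistic_share_r (u v : R) :
  exp v / (exp u + exp v) = 1 / 2 - (u - v) / 4 + logistic_rem (u - v).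
Proof. rewrite Rplus_comm; apply logistic_share. Qed.

Lemma bigO_eps2_expansion (p2 p3 l0 l1 d1 d2 : R) :
  bigO_eps2 (fun eps => (p2 + p3 * eps) * eps ^ 2
    + (l0 + l1 * eps) * logistic_rem (eps * d1 + eps ^ 2 * d2)).
Proof.
  apply bigO_eps2_add; apply bigO_eps2_mul_affine; [exact bigO_eps2_sq |].
  exact (bigO_eps2_comp _ _ bigO_eps2_logistic_rem (bigO_eps1_poly d1 d2)).
Qed.

Theorem mainTheorem1 (lam mu th al lh mh thh alh Delta : R) :
  0 < lam -> 0 < mu -> 0 < th -> 0 < Delta ->
  let q1s := fun eps => lam / (2 * mu) + coef_a lam mu th lh mh thh alh * eps in
  let q2s := fun eps => lam / (2 * mu) + coef_b lam mu th lh mh thh alh * eps in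
  bigO_eps2 (fun eps =>
    rhs1 lam mu th al lh mh thh alh eps (q1s eps) (q2s eps) (q1s eps)) /\
  bigO_eps2 (fun eps =>
    rhs2 lam mu th al lh mh thh alh eps (q1s eps) (q2s eps) (q2s eps)).
Proof.
  intros Hlam Hmu Hth _ q1s q2s.
  set (c := lam / (2 * mu)).
  set (A := coef_a lam mu th lh mh thh alh).
  set (B := coef_b lam mu th lh mh thh alh).
  set (d1 := th * (A - B) + thh * c - alh).
  set (d2 := thh * A).
  assert (Hden : lam * th + 2 * mu <> 0) by nra.
  split.
  - eapply bigO_eps2_ext; [| exact (bigO_eps2_expansion
      (- lh * d1 / 4 - lam * d2 / 4 - mh * A) (- lh * d2 / 4) lam lh d1 d2)].
    intros eps; unfold rhs1, q1s, q2s; cbv zeta; rewrite logistic_share.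
    match goal with |- context [logistic_rem ?z] =>
      replace z with (eps * d1 + eps ^ 2 * d2) by
        (unfold d1, d2, c, A, B, coef_a, coef_b; field; lra) end.
    unfold d1, d2, c, A, B, coef_a, coef_b; field; lra.
  - eapply bigO_eps2_ext; [| exact (bigO_eps2_expansion
      (lam * d2 / 4) 0 lam 0 (- d1) (- d2))].
    intros eps; unfold rhs2, q1s, q2s; cbv zeta.
    rewrite logistic_share_r.
    match goal with |- context [logistic_rem ?z] =>
      replace z with (eps * - d1 + eps ^ 2 * - d2) by
        (unfold d1, d2, c, A, B, coef_a, coef_b; field; lra) end.
    unfold d1, d2, c, A, B, coef_a, coef_b; field; lra.
Qed.
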